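(* Let $X=\{x_1,\dots,x_n\}\subset\mathbb{R}^m$ be a dataset, let $S=\{S_1,\dots,S_k\}$ be a partition of $X$ into clusters with centroids $z_1,\dots,z_k\in\mathbb{R}^m$, and let $p>1$. Suppose the features of $X$ consist of at least one relevant feature and at least one noise feature, and that each noise feature is drawn independently from a common distribution. Then, for a cluster $S_l$ and exponent $p>1$, at least one feature $v$ has weight strictly higher than $\frac{1}{m}$, i.e. $w_{lv}^{(p)}>\frac{1}{m}$.
   Context: For a cluster $S_l$ with centroid $z_l$, a feature $v$ and an exponent $p>1$, the within-cluster dispersion is $D_{lv}^{(p)}=\sum_{x_i\in S_l}|x_{iv}-z_{lv}|^p$ (assumed positive), and the Minkowski weighted $k$-means feature weight is \[ w_{lv}^{(p)}=\frac{1}{\sum_{u=1}^m\left(\frac{D_{lv}^{(p)}}{D_{lu}^{(p)}}\right)^{\frac{1}{p-1}}}, \] so that $\sum_{v=1}^m w_{lv}^{(p)}=1$ for each $l$. The features are partitioned into a set $R$ of relevant features and a set of noise features, where a feature $v$ is a noise feature if for each cluster $S_l$ and each $p>1$, $\frac{1}{|R|}\sum_{u\in R}(D_{lv}^{(p)}/D_{lu}^{(p)})^{1/(p-1)}>1$. *)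

From HB Require Import structures.
From mathcomp Require Import all_boot all_order all_algebra.
From mathcomp Require Import all_classical all_reals all_analysis.

Set Implicit Arguments.
Unset Strict Implicit.
Unset Printing Implicit Defensive.

Import Order.TTheory GRing.Theory Num.Theory.
Local Open Scope ring_scope.

(* Dataset X = {x_1..x_n} in R^m : X i v is feature v of point i.
   Partition into k clusters given by the assignment cl : 'I_n -> 'I_k
   (x_i \in S_l  iff  cl i = l); centroids z : 'I_k -> 'I_m -> R. *)

Definition dispersion (R : realType) (n m k : nat)
  (X : 'I_n -> 'I_m -> R) (cl : 'I_n -> 'I_k) (z : 'I_k -> 'I_m -> R)
  (p : R) (l : 'I_k) (v : 'I_m) : R :=
  \sum_(i < n | cl i == l) `|X i v - z l v| `^ p.

Definition mwk_weight (R : realType) (n m k : nat)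
  (X : 'I_n -> 'I_m -> R) (cl : 'I_n -> 'I_k) (z : 'I_k -> 'I_m -> R)
  (p : R) (l : 'I_k) (v : 'I_m) : R :=
  1 / \sum_(u < m)
        (dispersion X cl z p l v / dispersion X cl z p l u) `^ (1 / (p - 1)).

Definition noise_feature (R : realType) (n m k : nat)
  (X : 'I_n -> 'I_m -> R) (cl : 'I_n -> 'I_k) (z : 'I_k -> 'I_m -> R)
  (Rel : {set 'I_m}) (v : 'I_m) : Prop :=
  forall (l : 'I_k) (p : R), 1 < p ->
    1 < (#|Rel|%:R)^-1 *
        \sum_(u in Rel)
          (dispersion X cl z p l v / dispersion X cl z p l u) `^ (1 / (p - 1)).

(* For a feature v0 of minimal dispersion in cluster l, every ratio D_{v0}/D_u is at
   most 1 and the u = v0 term is 1, so w_{l v0} >= 1/m, strictly as soon as some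
   dispersion exceeds D_{v0}.  The dispersions cannot all coincide: then every ratio
   in the noise condition of a noise feature would be 1, and their mean not > 1. *)
From HB Require Import structures.
From mathcomp Require Import all_boot all_order all_algebra.
From mathcomp Require Import all_classical all_reals all_analysis.

Set Implicit Arguments.
Unset Strict Implicit.
Unset Printing Implicit Defensive.

Import Order.TTheory GRing.Theory Num.Theory.
Local Open Scope ring_scope.

Section PowerAndMeanBounds.
Variable R : realType.

Lemma powR_le1 (x a : R) : 0 <= a -> 0 <= x <= 1 -> x `^ a <= 1.
Proof.
move=> a_ge0 /andP[x_ge0 x_le1].
apply: (@le_trans _ _ (1 `^ a)); last by rewrite powR1.
by rewrite ge0_ler_powR ?nnegrE.
Qed.

Lemma powR_lt1 (x a : R) : 0 < a -> 0 <= x < 1 -> x `^ a < 1.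
Proof.
move=> a_gt0 /andP[x_ge0 x_lt1].
apply: (@lt_le_trans _ _ (1 `^ a)); last by rewrite powR1.
by rewrite gt0_ltr_powR ?nnegrE.
Qed.

Lemma sum_lt_card (I : finType) (f : I -> R) (j : I) :
  (forall i, f i <= 1) -> f j < 1 -> \sum_i f i < #|I|%:R.
Proof.
move=> f_le1 fj_lt1.
have -> : #|I|%:R = \sum_(i : I) (1 : R) by rewrite sumr_const.
rewrite (bigD1 j) //= [X in _ < X](bigD1 j) //= ltr_leD //.
by apply: ler_sum => i _; apply: f_le1.
Qed.

Lemma mean_le1 (I : finType) (A : {pred I}) (f : I -> R) :
  (forall i, i \in A -> f i <= 1) -> #|A|%:R^-1 * \sum_(i in A) f i <= 1.
Proof.
move=> f_le1; have [A0 | A_gt0] := posnP #|A|; first by rewrite A0 invr0 mul0r.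
rewrite ler_pdivrMl ?ltr0n // mulr1 -sum1_card natr_sum.
exact: ler_sum.
Qed.

End PowerAndMeanBounds.

Lemma exists_ratio_weight_gt_inv_card (R : realType) (I : finType)
    (D : I -> R) (a : R) (i j : I) :
  0 < a -> (forall u, 0 < D u) -> D i != D j ->
  exists v, #|I|%:R^-1 < (\sum_u (D v / D u) `^ a)^-1.
Proof.
move=> a_gt0 D_gt0 Dij.
pose v := [arg min_(u < i) D u]%O.
have Dv_min u : D v <= D u by rewrite /v; case: arg_minP => // w _; apply.
have [w Dvw] : exists w, D v < D w.
  have [Div | Div] := eqVneq (D i) (D v); last by exists i; rewrite lt_def Div Dv_min.
  by exists j; rewrite lt_def Dv_min andbT -Div eq_sym.
pose f u := (D v / D u) `^ a.
have ratio_ge0 u : 0 <= D v / D u by rewrite divr_ge0 // ltW.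
have f_le1 u : f u <= 1.
  apply: powR_le1; first exact: ltW.
  by rewrite ratio_ge0 ler_pdivrMr // mul1r Dv_min.
have fw_lt1 : f w < 1.
  apply: powR_lt1 => //.
  by rewrite ratio_ge0 ltr_pdivrMr // mul1r Dvw.
have sum_ge1 : 1 <= \sum_u f u.
  rewrite (bigD1 v) //= {1}/f divff ?gt_eqF // powR1 lerDl.
  by apply: sumr_ge0 => u _; apply: powR_ge0.
have sum_lt := sum_lt_card f_le1 fw_lt1.
have sum_gt0 : 0 < \sum_u f u := lt_le_trans ltr01 sum_ge1.
exists v; rewrite ltf_pV2 ?posrE //; exact: lt_trans sum_gt0 sum_lt.
Qed.

Lemma noise_feature_dispersion_nonconstant (R : realType) (n m k : nat)
    (X : 'I_n -> 'I_m -> R) (cl : 'I_n -> 'I_k) (z : 'I_k -> 'I_m -> R)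
    (Rel : {set 'I_m}) (v : 'I_m) (l : 'I_k) (p : R) :
  noise_feature X cl z Rel v -> 1 < p ->
  exists2 u, u \in Rel & dispersion X cl z p l u != dispersion X cl z p l v.
Proof.
move=> noise_v p_gt1; apply/exists_inP; have := noise_v l p p_gt1.
apply: contraTT; rewrite negb_exists_in -leNgt => /forall_inP Dflat.
apply: mean_le1 => u /Dflat/negPn/eqP ->.
set c := dispersion X cl z p l v.
apply: powR_le1; first by rewrite divr_ge0 // subr_ge0 ltW.
have [-> | c_neq0] := eqVneq c 0; first by rewrite mul0r lexx ler01.
by rewrite divff // ler01 lexx.
Qed.

Theorem mainTheorem2 (R : realType) (n m k : nat)
  (X : 'I_n -> 'I_m -> R) (cl : 'I_n -> 'I_k) (z : 'I_k -> 'I_m -> R)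
  (Rel : {set 'I_m})
  (Dpos : forall (p : R) (l : 'I_k) (v : 'I_m), 1 < p ->
            0 < dispersion X cl z p l v)
  (Rel_nonempty : exists u : 'I_m, u \in Rel)
  (noise_compl : forall v : 'I_m, v \notin Rel -> noise_feature X cl z Rel v)
  (noise_exists : exists v : 'I_m, v \notin Rel)
  (l : 'I_k) (p : R) (hp : 1 < p) :
  exists v : 'I_m, (m%:R)^-1 < mwk_weight X cl z p l v.
Proof.
have a_gt0 : 0 < 1 / (p - 1) by rewrite divr_gt0 // subr_gt0.
have [w w_noise] := noise_exists.
have [u _ Duw] := noise_feature_dispersion_nonconstant l (noise_compl w w_noise) hp.
have [v weight_gt] :=
  exists_ratio_weight_gt_inv_card a_gt0 (fun u => Dpos p l u hp) Duw.
by exists v; rewrite /mwk_weight div1r -[m in m%:R]card_ord.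
Qed.
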